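(* Let $\rho$ be an $n$-qubit pure state, $S\subseteq[n]$ non-empty with $s=|S|$, and $K\ge2$. Let $U=\bigotimes_{i\in S}U_i$ with independent Haar-random $U_i\in U(2)$ (identity outside $S$), and conditioned on $U$ let $\mathbf{Z}_1,\dots,\mathbf{Z}_K\in\{0,1\}^s$ be independent outcomes with distribution $P_U(\mathbf{z})=\operatorname{tr}\big(U\rho U^\dagger(|\mathbf{z}\rangle\langle\mathbf{z}|\otimes\mathbb{I}_{[n]\setminus S})\big)$. Let $$\hat S^{(K)}=\frac{1}{K(K-1)}\sum_{\substack{k,k'=1\\k\ne k'}}^K\mathbb{1}[\mathbf{Z}_k=\mathbf{Z}_{k'}],$$ and set $P_2=\mathbb{E}_U\big[\sum_{\mathbf z}P_U(\mathbf z)^2\big]$, $P_3=\mathbb{E}_U\big[\sum_{\mathbf z}P_U(\mathbf z)^3\big]$, $P_{2,2}=\mathbb{E}_U\big[\big(\sum_{\mathbf z}P_U(\mathbf z)^2\big)^2\big]$. Then $$\operatorname{Var}[\hat S^{(K)}]=\frac{2P_2(1-P_2)+4(K-2)(P_3-P_2^2)}{K(K-1)}+\frac{(K-2)(K-3)(P_{2,2}-P_2^2)}{K(K-1)},$$ where the variance is over both the random unitary and the measurement outcomes.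
   Context: $[n]=\{1,\dots,n\}$ labels the qubits; $\mathbb{1}[A]$ is $1$ if $A$ holds and $0$ otherwise. *)

From HB Require Import structures.
From mathcomp Require Import all_boot all_order all_algebra.
From mathcomp Require Import complex.
From mathcomp Require Import all_classical all_reals all_analysis.
Import Order.TTheory GRing.Theory Num.Theory.
Import numFieldTopology.Exports numFieldNormedType.Exports.

Set Implicit Arguments.
Unset Strict Implicit.
Unset Printing Implicit Defensive.

Local Open Scope ring_scope.

(* The usual (norm) topology on the complex numbers R[i], hence the product
   topology on 2x2 complex matrices 'M[R[i]]_2. *)
HB.instance Definition _ (R : rcfType) := PseudoPointedMetric.copy R[i] (R[i])^o.

(* computational basis of n qubits: bit strings x : [n] -> {0,1} *)
Definition bits (n : nat) := {ffun 'I_n -> bool}.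

(* measurement outcomes on the qubits of S : {0,1}^S (|S| = s bits) *)
Definition outcome (n : nat) (S : {set 'I_n}) := {ffun {i : 'I_n | i \in S} -> bool}.

(* index of the single-qubit basis vector |b> in a 2x2 matrix *)
Definition bit2 (b : bool) : 'I_2 := if b then ord_max else ord0.

(* operators on (C^2)^{\otimes n}, given by their matrix elements <x|A|y> *)
Definition op (R : rcfType) (n : nat) := bits n -> bits n -> R[i].

Definition opmul (R : rcfType) n (A B : op R n) : op R n :=
  fun x y => \sum_(w : bits n) A x w * B w y.

Definition adj (R : rcfType) n (A : op R n) : op R n :=
  fun x y => (A y x)^*.

Definition trace (R : rcfType) n (A : op R n) : R[i] :=
  \sum_(x : bits n) A x x.

(* U = \bigotimes_{i in S} U_i  (identity on qubits outside S) *)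
Definition tensU (R : rcfType) n (S : {set 'I_n}) (U : 'I_n -> 'M[R[i]]_2) : op R n :=
  fun x y => \prod_(i < n)
    (if i \in S then U i (bit2 (x i)) (bit2 (y i)) else ((x i == y i)%:R : R[i])).

Definition pure_dm (R : rcfType) n (psi : bits n -> R[i]) : op R n :=
  fun x y => psi x * (psi y)^*.

(* |z><z| (x) I_{[n] \ S} *)
Definition proj_out (R : rcfType) n (S : {set 'I_n}) (z : outcome S) : op R n :=
  fun x y => (((x == y) && [forall i : {i : 'I_n | i \in S}, x (val i) == z i]) %:R).

(* P_U(z) = tr(U rho U^dagger (|z><z| (x) I)) (a real number; we take its real part) *)
Definition prob_out (R : rcfType) n (psi : bits n -> R[i]) (S : {set 'I_n})
    (U : 'I_n -> 'M[R[i]]_2) (z : outcome S) : R :=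
  complex.Re (trace (opmul (opmul (opmul (tensU S U) (pure_dm psi))
                                  (adj (tensU S U))) (proj_out R z))).

Definition is_unitary (R : rcfType) (M : 'M[R[i]]_2) : bool :=
  M *m (map_mx (fun c => c^*) M)^T == 1%:M.

Local Open Scope ereal_scope.
Definition Expect (R : realType) (d : measure_display) (T : measurableType d)
    (P : probability T R) (f : T -> R) : R :=
  fine (\int[P]_w (f w)%:E).
Local Close Scope ereal_scope.

Definition bounded_continuous (R : realType) (f : 'M[R[i]]_2 -> R) : Prop :=
  continuous f /\ exists M : R, forall A, `|f A| <= M.

(* V is a Haar-distributed random element of U(2): unitary-valued, a (Borel)
   random variable, and its law is invariant under left multiplication by any
   fixed unitary (this characterizes the normalized Haar measure of U(2)). *)
Definition haar_U2 (R : realType) (d : measure_display) (T : measurableType d)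
    (P : probability T R) (V : T -> 'M[R[i]]_2) : Prop :=
  [/\ forall w, is_unitary (V w),
      forall f, bounded_continuous f -> measurable_fun setT (f \o V)
    & forall W, is_unitary W -> forall f, bounded_continuous f ->
        Expect P (fun w => f (W *m V w)) = Expect P (fun w => f (V w))].

Definition mutually_independent (R : realType) (d : measure_display)
    (T : measurableType d) (P : probability T R) n (S : {set 'I_n})
    (V : 'I_n -> T -> 'M[R[i]]_2) : Prop :=
  forall f : 'I_n -> 'M[R[i]]_2 -> R,
    (forall i, i \in S -> bounded_continuous (f i)) ->
    Expect P (fun w => \prod_(i in S) f i (V i w))
    = \prod_(i in S) Expect P (fun w => f i (V i w)).

Definition shat n (S : {set 'I_n}) (K : nat) (R : realType)
    (Z : {ffun 'I_K -> outcome S}) : R :=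
  (K%:R * (K%:R - 1))^-1 *
  \sum_(k < K) \sum_(k' < K | k' != k) ((Z k == Z k')%:R).

(* Expectation over both U and the outcomes: conditioned on U, the Z_k are
   i.i.d. with law P_U. *)
Definition EJ (R : realType) (d : measure_display) (T : measurableType d)
    (P : probability T R) n (psi : bits n -> R[i]) (S : {set 'I_n})
    (U : 'I_n -> T -> 'M[R[i]]_2) (K : nat) (g : {ffun 'I_K -> outcome S} -> R) : R :=
  Expect P (fun w => \sum_(Z : {ffun 'I_K -> outcome S})
    (\prod_(k < K) prob_out psi (fun i => U i w) (Z k)) * g Z).

Definition var_shat (R : realType) (d : measure_display) (T : measurableType d)
    (P : probability T R) n (psi : bits n -> R[i]) (S : {set 'I_n})
    (U : 'I_n -> T -> 'M[R[i]]_2) (K : nat) : R :=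
  EJ P psi U (fun Z : {ffun 'I_K -> outcome S} => (shat R Z) ^+ 2)
  - (EJ P psi U (fun Z : {ffun 'I_K -> outcome S} => shat R Z)) ^+ 2.

Definition Pmom (R : realType) (d : measure_display) (T : measurableType d)
    (P : probability T R) n (psi : bits n -> R[i]) (S : {set 'I_n})
    (U : 'I_n -> T -> 'M[R[i]]_2) (k : nat) : R :=
  Expect P (fun w => \sum_(z : outcome S) (prob_out psi (fun i => U i w) z) ^+ k).

Definition P22 (R : realType) (d : measure_display) (T : measurableType d)
    (P : probability T R) n (psi : bits n -> R[i]) (S : {set 'I_n})
    (U : 'I_n -> T -> 'M[R[i]]_2) : R :=
  Expect P (fun w => (\sum_(z : outcome S) (prob_out psi (fun i => U i w) z) ^+ 2) ^+ 2).

(* Conditioned on the unitary, the estimator is a U-statistic of K i.i.d. samples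
   of the outcome law p = P_U: its mean is sum_z p(z)^2, and its second moment is
   a sum over pairs of ordered pairs of distinct sample indices, where
   E[1[Z_k = Z_k'] 1[Z_l = Z_l']] depends only on the overlap of {k, k'} and
   {l, l'}: it is sum_z p(z)^2, sum_z p(z)^3 or (sum_z p(z)^2)^2 for an overlap
   of 2, 1 or 0, and for a fixed pair {k, k'} these overlaps occur 2, 4(K-2) and
   (K-2)(K-3) times.  Averaging over the unitary by linearity of expectation
   gives the variance. *)

From Pilot Require Import Defs.
From HB Require Import structures.
From mathcomp Require Import all_boot all_order all_algebra.
From mathcomp Require Import complex.
From mathcomp Require Import all_classical all_reals all_analysis.
From mathcomp Require Import measurable_realfun.
From mathcomp Require Import ring lra.
Import Order.TTheory GRing.Theory Num.Theory.
Import numFieldTopology.Exports numFieldNormedType.Exports.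

Set Implicit Arguments.
Unset Strict Implicit.
Unset Printing Implicit Defensive.

Local Open Scope ring_scope.

Lemma sum_delta_l (R : pzSemiRingType) (I : finType) (j : I) (F : I -> R) :
  \sum_i (i == j)%:R * F i = F j.
Proof.
rewrite (bigD1 j) //= eqxx mul1r big1 ?addr0 // => i /negbTE ->.
by rewrite mul0r.
Qed.

Lemma prod_mem_pair (R : comPzRingType) (I : finType) (A B : {set I})
    (h : bool -> bool -> R) :
  h false false = 1 ->
  \prod_i h (i \in A) (i \in B) =
  h true true ^+ #|A :&: B| * h true false ^+ #|A :\: B| * h false true ^+ #|B :\: A|.
Proof.
move=> h00; rewrite -!prodr_const !(big_mkcond (fun i => i \in _)) -!big_split /=.
apply: eq_bigr => i _; rewrite !inE.
by case: (i \in A); case: (i \in B); rewrite ?h00 ?mulr1 ?mul1r.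
Qed.

Lemma sum_mem (R : nmodType) (I : finType) (A : {set I}) (H : bool -> R) :
  \sum_i H (i \in A) = H true *+ #|A| + H false *+ #|~: A|.
Proof.
rewrite (bigID (mem A)) /= -!sumr_const; congr (_ + _).
  by apply: eq_bigr => i ->.
by apply: eq_big => [i|i /negbTE ->]; rewrite ?inE.
Qed.

Lemma card_setI_set2 (I : finType) (A : {set I}) (l l' : I) : l != l' ->
  #|A :&: [set l; l']| = ((l \in A) + (l' \in A))%N.
Proof.
move=> ll'; have -> : #|A :&: [set l; l']| = (\sum_(i in [set l; l']) (i \in A))%N.
  rewrite -sum1_card big_mkcond [RHS]big_mkcond; apply: eq_bigr => i _.
  by rewrite !inE; case: (i \in A); case: (_ || _).
by rewrite big_setU1 ?big_set1 ?inE.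
Qed.

Lemma sum_pairs_card_setI (R : comPzRingType) (I : finType) (A : {set I})
    (g : nat -> R) :
  let a := #|A|%:R in let b := #|~: A|%:R in
  \sum_l \sum_(l' | l' != l) g #|A :&: [set l; l']| =
  a * (a - 1) * g 2 + 2 * a * b * g 1 + b * (b - 1) * g 0.
Proof.
move=> a b.
have row l : \sum_(l' | l' != l) g #|A :&: [set l; l']| =
    \sum_l' g ((l \in A) + (l' \in A))%N - g ((l \in A) + (l \in A))%N.
  rewrite [X in _ = X - _](bigD1 l) //= addrC addrK.
  by apply: eq_bigr => l' l'l; rewrite card_setI_set2 // eq_sym.
under eq_bigr => l _ do rewrite row (sum_mem A (fun c => g ((l \in A) + c)%N)).
rewrite (sum_mem A (fun c => g (c + true)%N *+ #|A| + g (c + false)%N *+ #|~: A|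
                             - g (c + c)%N)) /=.
rewrite !mulr_natr -/a -/b; ring.
Qed.

Lemma sum_pairs_const (R : pzRingType) (K : nat) (x : R) :
  \sum_(k < K) \sum_(k' < K | k' != k) x = K%:R * (K%:R - 1) * x.
Proof.
under eq_bigr => k _ do rewrite sumr_const cardC1 card_ord.
rewrite sumr_const card_ord -mulrnA -[x *+ _]mulr_natl.
case: K => [|K]; first by rewrite !mul0r.
by rewrite mulnC natrM [in X in _ * (X - 1)]mulrSr addrK.
Qed.

Lemma prod_eq_ffun (R : comPzSemiRingType) (I : finType) (T : eqType)
    (v w : {ffun I -> T}) :
  \prod_i ((v i == w i)%:R : R) = (v == w)%:R.
Proof.
have [->|vw] := eqVneq v w; first by rewrite big1 // => i _; rewrite eqxx.
have [i viw] : exists i, v i != w i.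
  apply/existsP; apply: contraNT vw => /existsPn vw.
  by apply/eqP/ffunP => i; apply/eqP/negPn.
by rewrite (bigD1 i) //= (negbTE viw) mul0r.
Qed.

Section IidSampling.
Variables (R : comPzRingType) (O : finType) (K : nat) (p : O -> R).

Definition Eiid (f : {ffun 'I_K -> O} -> R) : R :=
  \sum_(Z : {ffun 'I_K -> O}) (\prod_k p (Z k)) * f Z.

Lemma Eiid_sum (I : Type) (r : seq I) (P : pred I) (f : I -> {ffun 'I_K -> O} -> R) :
  Eiid (fun Z => \sum_(i <- r | P i) f i Z) = \sum_(i <- r | P i) Eiid (f i).
Proof. by rewrite /Eiid; under eq_bigr do rewrite mulr_sumr; exact: exchange_big. Qed.

Lemma EiidZ (c : R) (f : {ffun 'I_K -> O} -> R) :
  Eiid (fun Z => c * f Z) = c * Eiid f.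
Proof. by rewrite /Eiid mulr_sumr; apply: eq_bigr => Z _; rewrite mulrCA. Qed.

Lemma Eiid_prod (g : 'I_K -> O -> R) :
  Eiid (fun Z => \prod_k g k (Z k)) = \prod_k \sum_x p x * g k x.
Proof. by rewrite bigA_distr_bigA; apply: eq_bigr => Z _; rewrite -big_split. Qed.

Definition collisions (Z : {ffun 'I_K -> O}) : R :=
  \sum_k \sum_(k' | k' != k) (Z k == Z k')%:R.

(* The value of E[1[Z_k = Z_k'] 1[Z_l = Z_l']] when {k, k'} and {l, l'} share c
   indices: a shared index forces z = z' and weighs p z, each of the 2 - c
   other indices of either pair weighs p z or p z'. *)
Definition pair_moment (c : nat) : R :=
  \sum_z \sum_z' ((z == z')%:R * p z) ^+ c * (p z * p z') ^+ (2 - c).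

Lemma pair_moment0 : pair_moment 0 = (\sum_z p z ^+ 2) ^+ 2.
Proof.
rewrite /pair_moment expr2 big_distrl /=; apply: eq_bigr => z _.
by rewrite big_distrr /=; apply: eq_bigr => z' _; rewrite mul1r exprMn.
Qed.

Lemma pair_moment_diag (c : nat) : (0 < c)%N ->
  pair_moment c = \sum_z p z ^+ c * p z ^+ (2 * (2 - c)).
Proof.
move=> c0; apply: eq_bigr => z _; rewrite (bigD1 z) //= eqxx mul1r big1 ?addr0.
  by rewrite -expr2 -exprM mulnC.
by move=> z' /negbTE; rewrite eq_sym => ->; rewrite mul0r expr0n gtn_eqF // mul0r.
Qed.

Lemma pair_moment1 : pair_moment 1 = \sum_z p z ^+ 3.
Proof. by rewrite pair_moment_diag //; apply: eq_bigr => z _; rewrite -exprD. Qed.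

Lemma pair_moment2 : pair_moment 2 = \sum_z p z ^+ 2.
Proof. by rewrite pair_moment_diag //; apply: eq_bigr => z _; rewrite mulr1. Qed.

Lemma collision_indicator (k k' : 'I_K) (Z : {ffun 'I_K -> O}) : k != k' ->
  (Z k == Z k')%:R = \sum_z \prod_(j in [set k; k']) ((Z j == z)%:R : R).
Proof.
move=> kk'; under eq_bigr do rewrite big_setU1 ?big_set1 ?inE //=.
rewrite (bigD1 (Z k)) //= eqxx mul1r eq_sym big1 ?addr0 // => z zk.
by rewrite eq_sym (negbTE zk) mul0r.
Qed.

Hypothesis sum_p1 : \sum_x p x = 1.

(* With both indicators written as sums of products over the sample indices
   (collision_indicator), the expectation factorizes over the samples. *)
Lemma Eiid_collision_pair (k k' l l' : 'I_K) : k != k' -> l != l' ->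
  Eiid (fun Z => (Z k == Z k')%:R * (Z l == Z l')%:R) =
  pair_moment #|[set k; k'] :&: [set l; l']|.
Proof.
move=> kk' ll'; set A := [set k; k']; set B := [set l; l'].
have cardA : #|A| = 2%N by rewrite cards2 kk'.
have cardB : #|B| = 2%N by rewrite cards2 ll'.
transitivity (Eiid (fun Z => \sum_z \sum_z' \prod_j
    ((if j \in A then (Z j == z)%:R else 1) * (if j \in B then (Z j == z')%:R else 1)))).
  apply: eq_bigr => Z _; congr (_ * _).
  rewrite (collision_indicator Z kk') (collision_indicator Z ll') mulr_suml.
  apply: eq_bigr => z _; rewrite mulr_sumr; apply: eq_bigr => z' _.
  by rewrite !(big_mkcond (fun j => j \in _)) -big_split.
rewrite Eiid_sum; apply: eq_bigr => z _; rewrite Eiid_sum; apply: eq_bigr => z' _.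
pose h a b :=
  \sum_x p x * ((if a then (x == z)%:R else 1) * (if b then (x == z')%:R else 1)).
have h11 : h true true = (z == z')%:R * p z.
  by rewrite /h; under eq_bigr do rewrite mulrCA; rewrite sum_delta_l mulrC.
have h10 : h true false = p z.
  by rewrite /h; under eq_bigr do rewrite mulr1 mulrC; rewrite sum_delta_l.
have h01 : h false true = p z'.
  by rewrite /h; under eq_bigr do rewrite mul1r mulrC; rewrite sum_delta_l.
have dA : #|A :\: B| = (2 - #|A :&: B|)%N by rewrite -cardA -(cardsID B A) addKn.
have dB : #|B :\: A| = (2 - #|A :&: B|)%N.
  by rewrite -cardB -(cardsID A B) finset.setIC addKn.
rewrite (Eiid_prod (fun j x =>
  (if j \in A then (x == z)%:R else 1) * (if j \in B then (x == z')%:R else 1))).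
rewrite (@prod_mem_pair _ _ A B h); last by rewrite /h; under eq_bigr do rewrite !mulr1.
by rewrite h11 h10 h01 dA dB -mulrA -exprMn.
Qed.

Lemma Eiid_collisions :
  Eiid collisions = K%:R * (K%:R - 1) * \sum_z p z ^+ 2.
Proof.
rewrite -pair_moment2 -sum_pairs_const /collisions Eiid_sum.
apply: eq_bigr => k _; rewrite Eiid_sum; apply: eq_bigr => k' k'k.
have kk' : k != k' by rewrite eq_sym.
have := Eiid_collision_pair kk' kk'; rewrite finset.setIid cards2 kk' => <-.
rewrite /Eiid; apply: eq_bigr => Z _.
by case: (Z k == Z k'); rewrite ?mulr1 ?mulr0.
Qed.

Lemma Eiid_collisions_sqr :
  Eiid (fun Z => collisions Z ^+ 2) = K%:R * (K%:R - 1) *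
    (2 * \sum_z p z ^+ 2 + 4 * (K%:R - 2) * \sum_z p z ^+ 3
     + (K%:R - 2) * (K%:R - 3) * (\sum_z p z ^+ 2) ^+ 2).
Proof.
transitivity (Eiid (fun Z => \sum_k \sum_(k' | k' != k) \sum_l \sum_(l' | l' != l)
    (Z k == Z k')%:R * (Z l == Z l')%:R)).
  apply: eq_bigr => Z _; congr (_ * _); rewrite expr2 mulr_suml.
  apply: eq_bigr => k _; rewrite mulr_suml; apply: eq_bigr => k' _.
  by rewrite mulr_sumr; apply: eq_bigr => l _; rewrite mulr_sumr.
rewrite -pair_moment0 -pair_moment1 -pair_moment2 -sum_pairs_const Eiid_sum.
apply: eq_bigr => k _; rewrite Eiid_sum; apply: eq_bigr => k' k'k.
have kk' : k != k' by rewrite eq_sym.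
set A := [set k; k'].
transitivity (\sum_l \sum_(l' | l' != l) pair_moment #|A :&: [set l; l']|).
  rewrite Eiid_sum; apply: eq_bigr => l _; rewrite Eiid_sum; apply: eq_bigr => l' l'l.
  by rewrite Eiid_collision_pair // eq_sym.
have cardA : #|A| = 2%N by rewrite cards2 kk'.
have eK : K%:R = 2 + #|~: A|%:R :> R by rewrite -cardA -natrD cardsC card_ord.
by rewrite sum_pairs_card_setI cardA eK; ring.
Qed.

End IidSampling.

Section Estimator.
Variables (R : realType) (n : nat) (S : {set 'I_n}) (K : nat) (p : outcome S -> R).
Hypotheses (sum_p1 : \sum_z p z = 1) (K_ge2 : (2 <= K)%N).

Lemma natr_pairs_neq0 : K%:R * (K%:R - 1) != 0 :> R.
Proof.
have K1 : 1 < K%:R :> R by rewrite ltr1n.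
by rewrite mulf_neq0 // ?subr_eq0 gt_eqF // (lt_trans ltr01 K1).
Qed.

Lemma Eiid_shat : Eiid p (fun Z : {ffun 'I_K -> outcome S} => shat R Z) = \sum_z p z ^+ 2.
Proof. by rewrite EiidZ Eiid_collisions // (mulKf natr_pairs_neq0). Qed.

Lemma Eiid_shat_sqr :
  Eiid p (fun Z : {ffun 'I_K -> outcome S} => shat R Z ^+ 2) =
  (K%:R * (K%:R - 1))^-1 *
    (2 * \sum_z p z ^+ 2 + 4 * (K%:R - 2) * \sum_z p z ^+ 3
     + (K%:R - 2) * (K%:R - 3) * (\sum_z p z ^+ 2) ^+ 2).
Proof.
rewrite -[X in _^-1 * X](mulKf natr_pairs_neq0) -Eiid_collisions_sqr // -!EiidZ.
by congr (Eiid _ _); apply: funext => Z; rewrite /shat exprMn expr2 -mulrA.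
Qed.

End Estimator.

Section ComplexParts.
Variable R : rcfType.
Implicit Types x y : R[i].

Lemma Re_sum (I : Type) (r : seq I) (P : pred I) (f : I -> R[i]) :
  complex.Re (\sum_(i <- r | P i) f i) = \sum_(i <- r | P i) complex.Re (f i).
Proof. exact: (raddf_sum (@complex.Re R : Rcomplex R -> R)). Qed.

Lemma ReDc x y : complex.Re (x + y) = complex.Re x + complex.Re y.
Proof. by case: x; case: y. Qed.

Lemma ImDc x y : complex.Im (x + y) = complex.Im x + complex.Im y.
Proof. by case: x; case: y. Qed.

Lemma ReMc x y :
  complex.Re (x * y) = complex.Re x * complex.Re y - complex.Im x * complex.Im y.
Proof. by case: x; case: y. Qed.

Lemma ImMc x y :
  complex.Im (x * y) = complex.Re x * complex.Im y + complex.Im x * complex.Re y.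
Proof. by case: x => a b; case: y => c e /=; ring. Qed.

Lemma ReJc x : complex.Re x^* = complex.Re x.
Proof. by case: x. Qed.

Lemma ImJc x : complex.Im x^* = - complex.Im x.
Proof. by case: x. Qed.

Lemma normc_ge_Re (z : R[i]) : `|complex.Re z| <= complex.Re `|z|.
Proof. by rewrite normc_def /= -sqrtr_sqr ler_wsqrtr // lerDl sqr_ge0. Qed.

Lemma normc_ge_Im (z : R[i]) : `|complex.Im z| <= complex.Re `|z|.
Proof. by rewrite normc_def /= -sqrtr_sqr ler_wsqrtr // lerDr sqr_ge0. Qed.

End ComplexParts.

Section ComplexContinuity.
Variable R : realType.

Lemma continuous_normc_lipschitz (f : R[i] -> R) :
  (forall x y, `|f x - f y| <= complex.Re `|x - y|) -> continuous f.
Proof.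
move=> fL x A /= /nbhs_ballP [e e0 xeA]; exists e%:C%C => /=; first by rewrite ltcR.
move=> y /=; rewrite ltcE => /andP [_ xye]; apply: xeA.
by rewrite /ball /=; apply: le_lt_trans xye.
Qed.

Lemma Re_continuous : continuous (fun x : R[i] => complex.Re x).
Proof.
apply: continuous_normc_lipschitz => x y; apply: le_trans (normc_ge_Re _).
by case: x; case: y.
Qed.

Lemma Im_continuous : continuous (fun x : R[i] => complex.Im x).
Proof.
apply: continuous_normc_lipschitz => x y; apply: le_trans (normc_ge_Im _).
by case: x; case: y.
Qed.

End ComplexContinuity.

Lemma sum_bit2 (R : nmodType) (f : 'I_2 -> R) :
  \sum_(b : bool) f (bit2 b) = \sum_(j < 2) f j.
Proof.
rewrite big_bool [RHS]big_ord_recl big_ord1 addrC.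
by congr (_ + _); congr f; apply: val_inj.
Qed.

(* Plain [is_unitary] would denote MathComp's sesquilinear notion. *)
Lemma unitary_col_orth (R : rcfType) (M : 'M[R[i]]_2) : Defs.is_unitary M ->
  forall c c' : 'I_2, \sum_b M b c * (M b c')^* = (c == c')%:R.
Proof.
move=> uM c c'; move/eqP/mulmx1C/matrixP: uM => /(_ c' c).
rewrite [in RHS]mxE eq_sym => <-; rewrite mxE.
by apply: eq_bigr => b _; rewrite !mxE mulrC.
Qed.

Lemma unitary_entry_norm (R : rcfType) (M : 'M[R[i]]_2) (a b : 'I_2) :
  Defs.is_unitary M ->
  complex.Re (M a b) ^+ 2 + complex.Im (M a b) ^+ 2 <= 1.
Proof.
move=> /eqP /matrixP /(_ a a); rewrite !mxE eqxx => /(congr1 (@complex.Re R)) /= rowa.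
have : \sum_j (complex.Re (M a j) ^+ 2 + complex.Im (M a j) ^+ 2) = 1.
  rewrite -rowa Re_sum; apply: eq_bigr => j _; rewrite !mxE.
  by case: (M a j) => x y /=; ring.
move=> <-; rewrite (bigD1 b) //= lerDl.
by apply: sumr_ge0 => j _; rewrite addr_ge0 ?sqr_ge0.
Qed.

Section NQubits.
Variables (R : rcfType) (n : nat) (S : {set 'I_n}).

Lemma sum_proj_out (x y : bits n) : \sum_(z : outcome S) proj_out R z x y = (x == y)%:R.
Proof.
rewrite /proj_out (bigD1 [ffun i => x (val i)]) //= big1 ?addr0.
  case: (x == y) => //=; rewrite (_ : [forall i, _] = true) //.
  by apply/forallP => i; rewrite ffunE.
move=> z zx; case: (x == y) => //=; case: forallP => // xz.
by move/eqP: zx; case; apply/ffunP => i; rewrite ffunE; apply/esym/eqP.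
Qed.

Lemma tensU_col_orth (U : 'I_n -> 'M[R[i]]_2) :
  (forall i, i \in S -> Defs.is_unitary (U i)) ->
  forall v w : bits n, \sum_x tensU S U x v * (tensU S U x w)^* = (v == w)%:R.
Proof.
move=> uU v w; rewrite /tensU.
under eq_bigr do rewrite rmorph_prod -big_split /=.
rewrite -(bigA_distr_bigA (fun i b =>
  (if i \in S then U i (bit2 b) (bit2 (v i)) else ((b == v i)%:R : R[i])) *
  (if i \in S then U i (bit2 b) (bit2 (w i)) else ((b == w i)%:R : R[i]))^*)).
rewrite -prod_eq_ffun; apply: eq_bigr => i _; case iS: (i \in S).
  rewrite (sum_bit2 (fun j => U i j (bit2 (v i)) * (U i j (bit2 (w i)))^*)).
  by rewrite unitary_col_orth ?uU //; case: (v i); case: (w i).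
rewrite big_bool /=.
by case: (v i); case: (w i);
  rewrite /= ?conjC0 ?conjC1 ?mulr0 ?mul0r ?mulr1 ?addr0 ?add0r.
Qed.

Variable psi : bits n -> R[i].
Hypothesis psi_normed : \sum_x `|psi x| ^+ 2 = 1.

Lemma trace_conj_pure_dm (U : 'I_n -> 'M[R[i]]_2) :
  (forall i, i \in S -> Defs.is_unitary (U i)) ->
  trace (opmul (opmul (tensU S U) (pure_dm psi)) (adj (tensU S U))) = 1.
Proof.
move=> uU; set W := tensU S U.
have diag x : opmul (opmul W (pure_dm psi)) (adj W) x x =
    \sum_v \sum_w W x v * (W x w)^* * pure_dm psi v w.
  rewrite /opmul /adj; under eq_bigr do rewrite big_distrl.
  rewrite exchange_big /=; apply: eq_bigr => v _; apply: eq_bigr => w _.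
  by rewrite mulrAC.
rewrite /trace; under eq_bigr do rewrite diag.
rewrite exchange_big -psi_normed; apply: eq_bigr => v _.
rewrite exchange_big (bigD1 v) //= -mulr_suml tensU_col_orth // eqxx mul1r.
rewrite big1 ?addr0 => [|w wv]; first by rewrite /pure_dm normCK.
by rewrite -mulr_suml tensU_col_orth // eq_sym (negbTE wv) mul0r.
Qed.

Lemma sum_prob_out (U : 'I_n -> 'M[R[i]]_2) :
  (forall i, i \in S -> Defs.is_unitary (U i)) ->
  \sum_(z : outcome S) prob_out psi U z = 1.
Proof.
move=> uU; rewrite /prob_out -Re_sum -[RHS]/(complex.Re 1) -(trace_conj_pure_dm uU).
congr complex.Re; rewrite /trace exchange_big /=; apply: eq_bigr => x _.
rewrite {1}/opmul exchange_big /=.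
under eq_bigr do rewrite -mulr_sumr sum_proj_out.
by rewrite (bigD1 x) //= eqxx mulr1 big1 ?addr0 // => w /negbTE ->; rewrite mulr0.
Qed.

End NQubits.

Section BoundedMeasurable.
Variables (R : realType) (d : measure_display) (T : measurableType d).

Definition bounded_measurable (f : T -> R) :=
  measurable_fun setT f /\ exists M : R, forall w, `|f w| <= M.

(* R[i] carries no sigma-algebra, so complex random variables are handled
   through their real and imaginary parts. *)
Definition cbounded_measurable (g : T -> R[i]) :=
  bounded_measurable (fun w => complex.Re (g w)) /\
  bounded_measurable (fun w => complex.Im (g w)).

Lemma bounded_measurable_cst (c : R) : bounded_measurable (fun _ => c).
Proof. by split; [exact: measurable_cst | exists `|c|]. Qed.

Lemma bounded_measurableD (f g : T -> R) : bounded_measurable f -> bounded_measurable g ->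
  bounded_measurable (fun w => f w + g w).
Proof.
move=> [mf [M fM]] [mg [N gN]]; split; first exact: measurable_funD.
by exists (M + N) => w; apply: le_trans (ler_normD _ _) _; apply: lerD.
Qed.

Lemma bounded_measurableN (f : T -> R) : bounded_measurable f ->
  bounded_measurable (fun w => - f w).
Proof.
move=> [mf [M fM]]; split; first exact: measurable_funN.
by exists M => w; rewrite normrN.
Qed.

Lemma bounded_measurableM (f g : T -> R) : bounded_measurable f -> bounded_measurable g ->
  bounded_measurable (fun w => f w * g w).
Proof.
move=> [mf [M fM]] [mg [N gN]]; split; first exact: measurable_funM.
by exists (M * N) => w; rewrite normrM; apply: ler_pM.
Qed.

Lemma bounded_measurable_sum (I : Type) (r : seq I) (P : pred I) (F : I -> T -> R) :
  (forall i, bounded_measurable (F i)) ->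
  bounded_measurable (fun w => \sum_(i <- r | P i) F i w).
Proof.
move=> mF; elim: r => [|i r IHr].
  under [X in bounded_measurable X]funext do rewrite big_nil.
  exact: bounded_measurable_cst.
under [X in bounded_measurable X]funext do rewrite big_cons.
by case: (P i) => //; apply: bounded_measurableD.
Qed.

Lemma bounded_measurableX (f : T -> R) (k : nat) : bounded_measurable f ->
  bounded_measurable (fun w => f w ^+ k).
Proof.
move=> mf; elim: k => [|k IHk].
  under [X in bounded_measurable X]funext do rewrite expr0.
  exact: bounded_measurable_cst.
by under [X in bounded_measurable X]funext do rewrite exprS; apply: bounded_measurableM.
Qed.

Lemma cbounded_measurable_cst (c : R[i]) : cbounded_measurable (fun _ => c).
Proof. by split; apply: bounded_measurable_cst. Qed.

Lemma cbounded_measurableD (f g : T -> R[i]) :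
  cbounded_measurable f -> cbounded_measurable g ->
  cbounded_measurable (fun w => f w + g w).
Proof.
move=> [Ref Imf] [Reg Img]; split.
  by under [X in bounded_measurable X]funext do rewrite ReDc; apply: bounded_measurableD.
by under [X in bounded_measurable X]funext do rewrite ImDc; apply: bounded_measurableD.
Qed.

Lemma cbounded_measurableM (f g : T -> R[i]) :
  cbounded_measurable f -> cbounded_measurable g ->
  cbounded_measurable (fun w => f w * g w).
Proof.
move=> [Ref Imf] [Reg Img]; split.
  under [X in bounded_measurable X]funext do rewrite ReMc.
  apply: bounded_measurableD; first exact: bounded_measurableM.
  by apply: bounded_measurableN; apply: bounded_measurableM.
under [X in bounded_measurable X]funext do rewrite ImMc.
by apply: bounded_measurableD; apply: bounded_measurableM.
Qed.

Lemma cbounded_measurableJ (f : T -> R[i]) :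
  cbounded_measurable f -> cbounded_measurable (fun w => (f w)^*).
Proof.
move=> [Ref Imf]; split; first by under [X in bounded_measurable X]funext do rewrite ReJc.
by under [X in bounded_measurable X]funext do rewrite ImJc; apply: bounded_measurableN.
Qed.

Lemma cbounded_measurable_sum (I : Type) (r : seq I) (P : pred I) (F : I -> T -> R[i]) :
  (forall i, cbounded_measurable (F i)) ->
  cbounded_measurable (fun w => \sum_(i <- r | P i) F i w).
Proof.
move=> mF; elim: r => [|i r IHr].
  under [X in cbounded_measurable X]funext do rewrite big_nil.
  exact: cbounded_measurable_cst.
under [X in cbounded_measurable X]funext do rewrite big_cons.
by case: (P i) => //; apply: cbounded_measurableD.
Qed.

Lemma cbounded_measurable_prod (I : Type) (r : seq I) (P : pred I) (F : I -> T -> R[i]) :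
  (forall i, cbounded_measurable (F i)) ->
  cbounded_measurable (fun w => \prod_(i <- r | P i) F i w).
Proof.
move=> mF; elim: r => [|i r IHr].
  under [X in cbounded_measurable X]funext do rewrite big_nil.
  exact: cbounded_measurable_cst.
under [X in cbounded_measurable X]funext do rewrite big_cons.
by case: (P i) => //; apply: cbounded_measurableM.
Qed.

End BoundedMeasurable.

Section Expectation.
Variables (R : realType) (d : measure_display) (T : measurableType d).
Variable P : probability T R.

Lemma bounded_measurable_integrable (f : T -> R) : bounded_measurable f ->
  P.-integrable setT (EFin \o f).
Proof.
move=> [mf [M fM]]; apply: measurable_bounded_integrable => //.
  exact: (le_lt_trans (probability_le1 P measurableT) (ltry 1)).
exists M; split=> [|M' MM' w _]; first exact: num_real.
exact: le_trans (fM w) (ltW MM').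
Qed.

Lemma ExpectD (f g : T -> R) : bounded_measurable f -> bounded_measurable g ->
  Expect P (fun w => f w + g w) = Expect P f + Expect P g.
Proof.
move=> mf mg; have := RintegralD measurableT
  (bounded_measurable_integrable mf) (bounded_measurable_integrable mg).
by rewrite /Rintegral.
Qed.

Lemma ExpectZl (c : R) (f : T -> R) : bounded_measurable f ->
  Expect P (fun w => c * f w) = c * Expect P f.
Proof.
by move=> mf; have := RintegralZl c measurableT (bounded_measurable_integrable mf).
Qed.

(* haar_U2 only gives measurability of f \o V for bounded continuous f, so h
   is clamped to [-1, 1], which does not change it along V. *)
Lemma haar_bounded_measurable_comp (V : T -> 'M[R[i]]_2) (h : 'M[R[i]]_2 -> R) :
  haar_U2 P V -> continuous h -> (forall w, `|h (V w)| <= 1) ->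
  bounded_measurable (h \o V).
Proof.
move=> [_ mV _] hc hV1; split; last by exists 1.
pose g := (fun _ => -1) \max ((fun _ => 1) \min h).
have -> : h \o V = g \o V.
  apply: funext => w; move: (hV1 w); rewrite ler_norml => /andP [h1 h2] /=.
  by rewrite /g /= (min_r h2) (max_r h1).
apply: mV; split.
  move=> A; apply: continuous_max; first exact: cst_continuous.
  by apply: continuous_min; [exact: cst_continuous | exact: hc].
exists 1 => A; rewrite /g /= ler_norml le_max lexx /= ge_max ge_min lexx /= andbT.
lra.
Qed.

Lemma cbounded_measurable_haar_entry (V : T -> 'M[R[i]]_2) (a b : 'I_2) :
  haar_U2 P V -> cbounded_measurable (fun w => V w a b).
Proof.
move=> hV; have [uV _ _] := hV.
have entry_le1 (x y : R) : x ^+ 2 + y ^+ 2 <= 1 -> `|x| <= 1.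
  by move=> xy; rewrite ler_norml; apply/andP; split; nra.
split.
- apply: (haar_bounded_measurable_comp (h := fun A => complex.Re (A a b))) => // [A|w].
    by apply: continuous_comp; [exact: coord_continuous | exact: Re_continuous].
  exact: entry_le1 (unitary_entry_norm a b (uV w)).
- apply: (haar_bounded_measurable_comp (h := fun A => complex.Im (A a b))) => // [A|w].
    by apply: continuous_comp; [exact: coord_continuous | exact: Im_continuous].
  by apply: entry_le1 (complex.Re (V w a b)) _; rewrite addrC unitary_entry_norm.
Qed.

End Expectation.

Section HaarOutcomes.
Variables (R : realType) (d : measure_display) (T : measurableType d).
Variables (P : probability T R) (n : nat) (psi : bits n -> R[i]) (S : {set 'I_n}).
Variable U : 'I_n -> T -> 'M[R[i]]_2.
Hypothesis U_haar : forall i, i \in S -> haar_U2 P (U i).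

Lemma cbounded_measurable_tensU (x y : bits n) :
  cbounded_measurable (fun w => tensU S (fun i => U i w) x y).
Proof.
apply: cbounded_measurable_prod => i; case iS: (i \in S).
  exact: cbounded_measurable_haar_entry (U_haar iS).
exact: cbounded_measurable_cst.
Qed.

Lemma bounded_measurable_prob_out (z : outcome S) :
  bounded_measurable (fun w => prob_out psi (fun i => U i w) z).
Proof.
suff [] : cbounded_measurable (fun w => trace (opmul (opmul (opmul
    (tensU S (fun i => U i w)) (pure_dm psi)) (adj (tensU S (fun i => U i w))))
    (proj_out R z))) by [].
rewrite /trace /opmul /adj.
by repeat first [ apply: cbounded_measurable_cst | apply: cbounded_measurable_sum => ?
  | apply: cbounded_measurableM | apply: cbounded_measurableJ
  | apply: cbounded_measurable_tensU ].
Qed.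

Lemma bounded_measurable_moment (k : nat) :
  bounded_measurable (fun w => \sum_(z : outcome S) prob_out psi (fun i => U i w) z ^+ k).
Proof.
apply: bounded_measurable_sum => z; apply: bounded_measurableX.
exact: bounded_measurable_prob_out.
Qed.

End HaarOutcomes.

Theorem lemma2 (R : realType) (n : nat) (psi : bits n -> R[i])
    (hpsi : \sum_(x : bits n) `|psi x| ^+ 2 = 1)
    (S : {set 'I_n}) (hS : S != finset.set0) (K : nat) (hK : (2 <= K)%N)
    (d : measure_display) (T : measurableType d) (P : probability T R)
    (U : 'I_n -> T -> 'M[R[i]]_2)
    (hHaar : forall i, i \in S -> haar_U2 P (U i))
    (hind : mutually_independent P S U) :
  let P2 := Pmom P psi S U 2 in
  let P3 := Pmom P psi S U 3 in
  let P2_2 := P22 P psi S U in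
  var_shat P psi S U K =
    (2 * P2 * (1 - P2) + 4 * (K%:R - 2) * (P3 - P2 ^+ 2)) / (K%:R * (K%:R - 1))
    + (K%:R - 2) * (K%:R - 3) * (P2_2 - P2 ^+ 2) / (K%:R * (K%:R - 1)).
Proof.
move=> P2 P3 P2_2.
pose p (w : T) : outcome S -> R := prob_out psi (fun i => U i w).
have p_sum1 w : \sum_z p w z = 1.
  by apply: sum_prob_out => // i iS; have [uU _ _] := hHaar i iS.
have EJ_Eiid (g : {ffun 'I_K -> outcome S} -> R) :
  EJ P psi U g = Expect P (fun w => Eiid (p w) g) by [].
rewrite /var_shat !EJ_Eiid.
rewrite (funext (fun w => Eiid_shat (p_sum1 w) hK)).
rewrite (funext (fun w => Eiid_shat_sqr (p_sum1 w) hK)).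
have moment_bm := bounded_measurable_moment psi hHaar.
rewrite ExpectZl ?ExpectD ?ExpectZl; last first.
all: repeat first [ exact: moment_bm | apply: bounded_measurable_cst
  | apply: bounded_measurableD | apply: bounded_measurableX | apply: bounded_measurableM ].
rewrite -[Expect P (fun w => \sum_z _ ^+ 2)]/P2.
rewrite -[Expect P (fun w => \sum_z _ ^+ 3)]/P3 -[Expect P _]/P2_2.
have K1 : 1 < K%:R :> R by rewrite ltr1n.
by field; rewrite subr_eq0 !gt_eqF // (lt_trans ltr01 K1).
Qed.
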